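(* Let $\mathbf{g}\in H_{1,2,2}$ and let $s$ be a positive integer with $2^s \mid N(\mathbf{g})$. Then $(1+\mathbf{i})^s$ divides $\mathbf{g}$ on the left and on the right in $H_{1,2,2}$, i.e. there exist $\mathbf{h},\mathbf{h}'\in H_{1,2,2}$ with $\mathbf{g}=(1+\mathbf{i})^s\mathbf{h}=\mathbf{h}'(1+\mathbf{i})^s$.
   Context: Let $\mathbf{i},\mathbf{j},\mathbf{k}$ be the standard basis units of the real quaternions; the conjugate of $\mathbf{q}=q_1+q_2\mathbf{i}+q_3\mathbf{j}+q_4\mathbf{k}$ is $\overline{\mathbf{q}}=q_1-q_2\mathbf{i}-q_3\mathbf{j}-q_4\mathbf{k}$ and $N(\mathbf{q})=\mathbf{q}\overline{\mathbf{q}}$. $H_{1,2,2}$ is the $\mathbb{Z}$-module (a subring of the quaternions) generated by $\mathbf{v}_1=1$, $\mathbf{v}_2=\mathbf{i}$, $\mathbf{v}_3=\tfrac12(1+\mathbf{i}+\sqrt2\,\mathbf{j})$, $\mathbf{v}_4=\tfrac12(1+\mathbf{i}+\sqrt2\,\mathbf{k})$; the norm takes nonnegative integer values on it. *)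

From Stdlib Require Import Reals ZArith.
Open Scope R_scope.

Record quat := Quat { q1 : R; q2 : R; q3 : R; q4 : R }.

Definition qadd (p q : quat) : quat :=
  Quat (q1 p + q1 q) (q2 p + q2 q) (q3 p + q3 q) (q4 p + q4 q).

(* Hamilton product: i^2 = j^2 = k^2 = ijk = -1 *)
Definition qmul (p q : quat) : quat :=
  Quat (q1 p * q1 q - q2 p * q2 q - q3 p * q3 q - q4 p * q4 q)
       (q1 p * q2 q + q2 p * q1 q + q3 p * q4 q - q4 p * q3 q)
       (q1 p * q3 q - q2 p * q4 q + q3 p * q1 q + q4 p * q2 q)
       (q1 p * q4 q + q2 p * q3 q - q3 p * q2 q + q4 p * q1 q).

Definition qscale (r : R) (q : quat) : quat :=
  Quat (r * q1 q) (r * q2 q) (r * q3 q) (r * q4 q).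

Definition qofR (r : R) : quat := Quat r 0 0 0.

Definition qone : quat := qofR 1.
Definition qi : quat := Quat 0 1 0 0.
Definition qj : quat := Quat 0 0 1 0.
Definition qk : quat := Quat 0 0 0 1.

Definition qconj (q : quat) : quat := Quat (q1 q) (- q2 q) (- q3 q) (- q4 q).

(* N(q) = q * conj q (a quaternion which is a real scalar) *)
Definition qN (q : quat) : quat := qmul q (qconj q).

Fixpoint qpow (q : quat) (n : nat) : quat :=
  match n with
  | O => qone
  | S n' => qmul q (qpow q n')
  end.

Definition v1 : quat := qone.
Definition v2 : quat := qi.
Definition v3 : quat := qscale (1/2) (qadd (qadd qone qi) (qscale (sqrt 2) qj)).
Definition v4 : quat := qscale (1/2) (qadd (qadd qone qi) (qscale (sqrt 2) qk)).

Definition in_H122 (q : quat) : Prop :=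
  exists a b c d : Z,
    q = qadd (qadd (qscale (IZR a) v1) (qscale (IZR b) v2))
             (qadd (qscale (IZR c) v3) (qscale (IZR d) v4)).

(* Write g = a v1 + b v2 + c v3 + d v4.  Then
   4 N(g) = (2a+c+d)^2 + (2b+c+d)^2 + 2c^2 + 2d^2, and when N(g) is even a
   computation modulo 8 forces c + d and a + b + c to be even.  Under these
   parity conditions (1+i)^-1 g and g (1+i)^-1 have explicit integer
   coordinates, so 1+i divides g on both sides in H_{1,2,2}.  As N is
   multiplicative and N(1+i) = 2, the quotient has norm N(g)/2, and s
   divisions give the claim. *)
From Stdlib Require Import Reals ZArith Lia Lra.
Open Scope R_scope.

Definition qnorm (q : quat) : R :=
  q1 q * q1 q + q2 q * q2 q + q3 q * q3 q + q4 q * q4 q.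

Lemma qN_qnorm (q : quat) : qN q = qofR (qnorm q).
Proof. destruct q; unfold qN, qmul, qconj, qnorm, qofR; simpl; f_equal; ring. Qed.

Lemma qnorm_qmul (p q : quat) : qnorm (qmul p q) = qnorm p * qnorm q.
Proof. destruct p, q; unfold qnorm, qmul; simpl; ring. Qed.

Lemma qmulA (p q r : quat) : qmul p (qmul q r) = qmul (qmul p q) r.
Proof. destruct p, q, r; unfold qmul; simpl; f_equal; ring. Qed.

Lemma qmul1q (q : quat) : qmul qone q = q.
Proof. destruct q; unfold qmul, qone, qofR; simpl; f_equal; ring. Qed.

Lemma qmulq1 (q : quat) : qmul q qone = q.
Proof. destruct q; unfold qmul, qone, qofR; simpl; f_equal; ring. Qed.

Lemma qpow_comm (p : quat) (n : nat) : qmul (qpow p n) p = qmul p (qpow p n).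
Proof.
induction n as [|n IHn]; simpl.
- now rewrite qmul1q, qmulq1.
- now rewrite <- qmulA, IHn.
Qed.

Definition one_plus_i : quat := qadd qone qi.

Lemma qnorm_one_plus_i : qnorm one_plus_i = 2.
Proof. unfold qnorm, one_plus_i, qadd, qone, qofR, qi; simpl; ring. Qed.

Lemma pow2_succ_mul (s : nat) (m : Z) :
  (2 ^ Z.of_nat (S s) * m = 2 * (2 ^ Z.of_nat s * m))%Z.
Proof. rewrite Nat2Z.inj_succ, Z.pow_succ_r by lia. ring. Qed.

Section IteratedDivision.

Variables (A : quat -> Prop) (p : quat).
Hypothesis qnorm_p : qnorm p = 2.

Hypothesis ldiv : forall g m,
  A g -> qnorm g = IZR (2 * m) -> exists h, A h /\ g = qmul p h.

Lemma ldiv_pow (s : nat) : forall g m,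
  A g -> qnorm g = IZR (2 ^ Z.of_nat s * m) -> exists h, A h /\ g = qmul (qpow p s) h.
Proof.
induction s as [|s IHs]; intros g m Ag Hg.
- exists g; split; [exact Ag | now rewrite qmul1q].
- rewrite pow2_succ_mul in Hg.
  destruct (ldiv g _ Ag Hg) as [h1 [Ah1 E1]].
  assert (Nh1 : qnorm h1 = IZR (2 ^ Z.of_nat s * m)).
  { rewrite E1, qnorm_qmul, qnorm_p, mult_IZR in Hg; simpl in Hg; lra. }
  destruct (IHs h1 m Ah1 Nh1) as [h [Ah E]].
  exists h; split; [exact Ah |].
  now rewrite E1, E, qmulA.
Qed.

Hypothesis rdiv : forall g m,
  A g -> qnorm g = IZR (2 * m) -> exists h, A h /\ g = qmul h p.

Lemma rdiv_pow (s : nat) : forall g m,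
  A g -> qnorm g = IZR (2 ^ Z.of_nat s * m) -> exists h, A h /\ g = qmul h (qpow p s).
Proof.
induction s as [|s IHs]; intros g m Ag Hg.
- exists g; split; [exact Ag | now rewrite qmulq1].
- rewrite pow2_succ_mul in Hg.
  destruct (rdiv g _ Ag Hg) as [h1 [Ah1 E1]].
  assert (Nh1 : qnorm h1 = IZR (2 ^ Z.of_nat s * m)).
  { rewrite E1, qnorm_qmul, qnorm_p, mult_IZR in Hg; simpl in Hg; lra. }
  destruct (IHs h1 m Ah1 Nh1) as [h [Ah E]].
  exists h; split; [exact Ah |].
  now rewrite E1, E, <- qmulA, qpow_comm.
Qed.

End IteratedDivision.

Definition H122_of (a b c d : Z) : quat :=
  qadd (qadd (qscale (IZR a) v1) (qscale (IZR b) v2))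
       (qadd (qscale (IZR c) v3) (qscale (IZR d) v4)).

Lemma in_H122_of (a b c d : Z) : in_H122 (H122_of a b c d).
Proof. now exists a, b, c, d. Qed.

Lemma H122_ofE (a b c d : Z) : H122_of a b c d =
  Quat (IZR a + (IZR c + IZR d) / 2) (IZR b + (IZR c + IZR d) / 2)
       (IZR c * sqrt 2 / 2) (IZR d * sqrt 2 / 2).
Proof.
unfold H122_of, v1, v2, v3, v4, qadd, qscale, qone, qofR, qi, qj, qk; simpl.
f_equal; field.
Qed.

Lemma qnorm_H122_of (a b c d : Z) : 4 * qnorm (H122_of a b c d) =
  IZR ((2*a + c + d)^2 + (2*b + c + d)^2 + 2*c^2 + 2*d^2)%Z.
Proof.
assert (sqrt2_sq : sqrt 2 * sqrt 2 = 2) by (apply sqrt_sqrt; lra).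
rewrite H122_ofE; unfold qnorm; cbn [q1 q2 q3 q4].
rewrite !Z.pow_2_r; repeat rewrite ?plus_IZR, ?mult_IZR.
replace (IZR c * sqrt 2 / 2 * (IZR c * sqrt 2 / 2))
  with (IZR c * IZR c * (sqrt 2 * sqrt 2) / 4) by field.
replace (IZR d * sqrt 2 / 2 * (IZR d * sqrt 2 / 2))
  with (IZR d * IZR d * (sqrt 2 * sqrt 2) / 4) by field.
rewrite sqrt2_sq; field.
Qed.

Lemma Z_mul_self_parity (t : Z) : exists w, (t * t = t + 2 * w)%Z.
Proof.
destruct (Z.Even_or_Odd t) as [[k ->] | [k ->]];
  [exists (2*k*k - k)%Z | exists (2*k*k + k)%Z]; ring.
Qed.

(* Substituting x = 2y or x = 2y+1 and y*y = y + 2w turns the congruence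
   modulo 8 into a linear problem that lia can decide. *)
Lemma H122_norm_form_even (a b c d m : Z) :
  ((2*a + c + d)^2 + (2*b + c + d)^2 + 2*c^2 + 2*d^2 = 8 * m)%Z ->
  ((c + d) mod 2 = 0 /\ (a + b + c) mod 2 = 0)%Z.
Proof.
intro H.
destruct (Z.Even_or_Odd a) as [[a1 ->] | [a1 ->]];
destruct (Z.Even_or_Odd b) as [[b1 ->] | [b1 ->]];
destruct (Z.Even_or_Odd c) as [[c1 ->] | [c1 ->]];
destruct (Z.Even_or_Odd d) as [[d1 ->] | [d1 ->]];
destruct (Z_mul_self_parity a1) as [wa Ha];
destruct (Z_mul_self_parity b1) as [wb Hb];
destruct (Z_mul_self_parity c1) as [wc Hc];
destruct (Z_mul_self_parity d1) as [wd Hd];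
Z.to_euclidean_division_equations; lia.
Qed.

Lemma H122_even_norm_parity (a b c d m : Z) :
  qnorm (H122_of a b c d) = IZR (2 * m) ->
  exists k l, (c + d = 2 * k /\ a + b + c = 2 * l)%Z.
Proof.
intro Hn.
destruct (H122_norm_form_even a b c d m) as [Hcd Habc].
- apply eq_IZR; rewrite <- qnorm_H122_of, Hn, !mult_IZR; simpl; ring.
- exists ((c + d) / 2)%Z, ((a + b + c) / 2)%Z.
  Z.to_euclidean_division_equations; lia.
Qed.

Lemma H122_of_ldiv (a k l c : Z) :
  H122_of a (2*l - a - c) c (2*k - c) =
  qmul one_plus_i (H122_of l (l - a - k) k (k - c)).
Proof.
rewrite !H122_ofE; repeat rewrite ?minus_IZR, ?plus_IZR, ?mult_IZR.
unfold one_plus_i, qmul, qadd, qone, qofR, qi; cbn [q1 q2 q3 q4]; f_equal; field.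
Qed.

Lemma H122_of_rdiv (a k l c : Z) :
  H122_of a (2*l - a - c) c (2*k - c) =
  qmul (H122_of (l + k - c) (l - a - c) (c - k) k) one_plus_i.
Proof.
rewrite !H122_ofE; repeat rewrite ?minus_IZR, ?plus_IZR, ?mult_IZR.
unfold one_plus_i, qmul, qadd, qone, qofR, qi; cbn [q1 q2 q3 q4]; f_equal; field.
Qed.

Lemma H122_even_norm_coords (g : quat) (m : Z) :
  in_H122 g -> qnorm g = IZR (2 * m) ->
  exists a c k l, g = H122_of a (2*l - a - c) c (2*k - c).
Proof.
intros [a [b [c [d ->]]]] Hn; fold (H122_of a b c d) in Hn |- *.
destruct (H122_even_norm_parity a b c d m Hn) as [k [l [Hk Hl]]].
exists a, c, k, l; f_equal; lia.
Qed.

Lemma H122_ldiv_one_plus_i (g : quat) (m : Z) :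
  in_H122 g -> qnorm g = IZR (2 * m) -> exists h, in_H122 h /\ g = qmul one_plus_i h.
Proof.
intros Hg Hn; destruct (H122_even_norm_coords g m Hg Hn) as [a [c [k [l ->]]]].
eexists; split; [apply in_H122_of | apply H122_of_ldiv].
Qed.

Lemma H122_rdiv_one_plus_i (g : quat) (m : Z) :
  in_H122 g -> qnorm g = IZR (2 * m) -> exists h, in_H122 h /\ g = qmul h one_plus_i.
Proof.
intros Hg Hn; destruct (H122_even_norm_coords g m Hg Hn) as [a [c [k [l ->]]]].
eexists; split; [apply in_H122_of | apply H122_of_rdiv].
Qed.

Theorem corollary4 (g : quat) (s : nat) :
  in_H122 g ->
  (0 < s)%nat ->
  (exists m : Z, qN g = qofR (IZR (2 ^ Z.of_nat s * m)%Z)) ->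
  exists h h' : quat,
    in_H122 h /\ in_H122 h' /\
    g = qmul (qpow (qadd qone qi) s) h /\
    g = qmul h' (qpow (qadd qone qi) s).
Proof.
intros Hg _ [m Hm].
assert (Hn : qnorm g = IZR (2 ^ Z.of_nat s * m)).
{ rewrite qN_qnorm in Hm; now injection Hm. }
destruct (ldiv_pow in_H122 one_plus_i qnorm_one_plus_i H122_ldiv_one_plus_i s g m Hg Hn)
  as [h [Hh E]].
destruct (rdiv_pow in_H122 one_plus_i qnorm_one_plus_i H122_rdiv_one_plus_i s g m Hg Hn)
  as [h' [Hh' E']].
now exists h, h'.
Qed.
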